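(* Let $N=(A,B,C,\eta,\chi,\psi)$ be an extended $\eta$-diagram. Then $\Delta(N)\cong(A',B',C',\eta',\chi',\psi')$ where $B'=\mathrm{Hom}(B,\mathbb{Z}/4)$; $A'$ is the set of pairs $(g,h)$ with $g\colon B\to\mathbb{Z}/2$, $h\colon C\to\mathbb{Z}$ such that $g\circ\chi$ equals $h$ followed by reduction $\mathbb{Z}\to\mathbb{Z}/2$; $C'$ is the set of pairs $(f,g)$ with $f\colon A\to\mathbb{Z}$, $g\colon B\to\mathbb{Z}/2$ such that $g\circ\chi\circ\eta$ equals $f$ followed by reduction $\mathbb{Z}\to\mathbb{Z}/2$; and, with $t\colon\mathbb{Z}/2\to\mathbb{Z}/4$ and $s\colon\mathbb{Z}/4\to\mathbb{Z}/2$ the unique nonzero homomorphisms, the structure maps $\psi'\colon B'\to A'$, $\eta'\colon A'\to C'$, $\chi'\colon C'\to B'$ are $\psi'(g)=(sg,0)$, $\eta'(g,h)=(0,g)$, $\chi'(f,g)=tg$.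
   Context: An extended $\eta$-diagram $N=(A,B,C,\eta,\chi,\psi)$ is a diagram of abelian groups $B\xrightarrow{\psi}A\xrightarrow{\eta}C\xrightarrow{\chi}B$ with $2\eta=0$, $\psi\chi=0$, $\chi\eta\psi=2\cdot1_B$. Let $\mathcal{J}$ be the additive category with objects $a,b,c$, generated by morphisms $\rho\colon a\to b$, $\eta\colon c\to a$, $\beta\colon b\to c$ subject to $2\rho=2\eta=2\beta=0$, $\beta\rho=0$, $\rho\eta\beta=2\cdot1_b$; explicitly $\mathcal{J}(a,a)=\mathbb{Z}$, $\mathcal{J}(a,b)=(\mathbb{Z}/2)\rho$, $\mathcal{J}(a,c)=0$, $\mathcal{J}(b,a)=(\mathbb{Z}/2)\eta\beta$, $\mathcal{J}(b,b)=\mathbb{Z}/4$, $\mathcal{J}(b,c)=(\mathbb{Z}/2)\beta$, $\mathcal{J}(c,a)=(\mathbb{Z}/2)\eta$, $\mathcal{J}(c,b)=(\mathbb{Z}/2)\rho\eta$, $\mathcal{J}(c,c)=\mathbb{Z}$. Extended $\eta$-diagrams are identified with additive functors $\mathcal{J}^{op}\to\mathrm{Ab}$ via $N(a)=A$, $N(b)=B$, $N(c)=C$, $N(\rho)=\psi$, $N(\eta)=\eta$, $N(\beta)=\chi$; morphisms are natural transformations; this category is $\mathrm{EED}$. $F_x=\mathcal{J}(-,x)$. $\Delta\colon\mathcal{J}^{op}\to\mathcal{J}$ is the functor with $\Delta(a)=c$, $\Delta(b)=b$, $\Delta(c)=a$, $\Delta(\rho)=\beta$, $\Delta(\eta)=\eta$,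 $\Delta(\beta)=\rho$. For $N\in\mathrm{EED}$, $\Delta(N)(x)=\mathrm{EED}(N,F_{\Delta(x)})$, functorial in $x$ via composition with $F_{\Delta(u)}$; its $A$-, $B$-, $C$-groups are $\Delta(N)(a),\Delta(N)(b),\Delta(N)(c)$. *)

From HB Require Import structures.
From mathcomp Require Import all_boot all_order all_algebra.
Set Implicit Arguments. Unset Strict Implicit. Unset Printing Implicit Defensive.
Import GRing.Theory.
Local Open Scope ring_scope.

Definition additive_map (U V : zmodType) (f : U -> V) : Prop :=
  forall x y, f (x + y) = f x + f y.

Record EED := MkEED {
  EA : zmodType; EB : zmodType; EC : zmodType;
  e_eta : EA -> EC; e_chi : EC -> EB; e_psi : EB -> EA;
  e_eta_add : additive_map e_eta;
  e_chi_add : additive_map e_chi;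
  e_psi_add : additive_map e_psi;
  e_2eta : forall x, (e_eta x) *+ 2 = 0;
  e_psichi : forall z, e_psi (e_chi z) = 0;
  e_chietapsi : forall y, e_chi (e_eta (e_psi y)) = y *+ 2 }.
Arguments e_eta N _ : rename, clear implicits.
Arguments e_chi N _ : rename, clear implicits.
Arguments e_psi N _ : rename, clear implicits.

(* Morphisms of EED = natural transformations of functors J^op -> Ab:
   additive components, natural w.r.t. the generators rho, eta, beta of J. *)
Record EEDhom (N M : EED) := MkEEDhom {
  hA : EA N -> EA M; hB : EB N -> EB M; hC : EC N -> EC M;
  hA_add : additive_map hA; hB_add : additive_map hB; hC_add : additive_map hC;
  h_nat_rho  : forall y, hA (e_psi N y) = e_psi M (hB y);
  h_nat_eta  : forall x, hC (e_eta N x) = e_eta M (hA x);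
  h_nat_beta : forall z, hB (e_chi N z) = e_chi M (hC z) }.

Section Comp.
Variables (N M P : EED) (f : EEDhom M P) (g : EEDhom N M).
Let cA := fun x => hA f (hA g x).
Let cB := fun x => hB f (hB g x).
Let cC := fun x => hC f (hC g x).
Lemma cA_add : additive_map cA.
Proof. by move=> x y; rewrite /cA hA_add hA_add. Qed.
Lemma cB_add : additive_map cB.
Proof. by move=> x y; rewrite /cB hB_add hB_add. Qed.
Lemma cC_add : additive_map cC.
Proof. by move=> x y; rewrite /cC hC_add hC_add. Qed.
Lemma c_rho : forall y, cA (e_psi N y) = e_psi P (cB y).
Proof. by move=> y; rewrite /cA /cB !h_nat_rho. Qed.
Lemma c_eta : forall x, cC (e_eta N x) = e_eta P (cA x).
Proof. by move=> x; rewrite /cA /cC !h_nat_eta. Qed.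
Lemma c_beta : forall z, cB (e_chi N z) = e_chi P (cC z).
Proof. by move=> z; rewrite /cB /cC !h_nat_beta. Qed.
Definition hom_comp : EEDhom N P :=
  MkEEDhom cA_add cB_add cC_add c_rho c_eta c_beta.
End Comp.

Section Add.
Variables (N M : EED) (f g : EEDhom N M).
Let sA := fun x => hA f x + hA g x.
Let sB := fun x => hB f x + hB g x.
Let sC := fun x => hC f x + hC g x.
Lemma sA_add : additive_map sA.
Proof. by move=> x y; rewrite /sA !hA_add addrACA. Qed.
Lemma sB_add : additive_map sB.
Proof. by move=> x y; rewrite /sB !hB_add addrACA. Qed.
Lemma sC_add : additive_map sC.
Proof. by move=> x y; rewrite /sC !hC_add addrACA. Qed.
Lemma s_rho : forall y, sA (e_psi N y) = e_psi M (sB y).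
Proof. by move=> y; rewrite /sA /sB !h_nat_rho e_psi_add. Qed.
Lemma s_eta : forall x, sC (e_eta N x) = e_eta M (sA x).
Proof. by move=> x; rewrite /sA /sC !h_nat_eta e_eta_add. Qed.
Lemma s_beta : forall z, sB (e_chi N z) = e_chi M (sC z).
Proof. by move=> z; rewrite /sB /sC !h_nat_beta e_chi_add. Qed.
Definition hom_add : EEDhom N M :=
  MkEEDhom sA_add sB_add sC_add s_rho s_eta s_beta.
End Add.

(* Concrete groups: Z = int, Z/2 = 'Z_2, Z/4 = 'Z_4, 0 = 'I_1. *)
Definition red2 (z : int) : 'Z_2 := z%:~R.
Definition s4 (k : 'Z_4) : 'Z_2 := (k : nat)%:R.
Definition t2 (k : 'Z_2) : 'Z_4 := ((k : nat) * 2)%:R.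

Lemma red2_add : additive_map red2.
Proof. by move=> x y; rewrite /red2 mulrzDr. Qed.

Lemma s4_add : additive_map s4.
Proof.
suff H : [forall x : 'Z_4, forall y : 'Z_4, s4 (x+y) == s4 x + s4 y].
  by move=> x y; apply/eqP; move/forallP: H => /(_ x)/forallP/(_ y).
by apply/forallP=> -[[|[|[|[|n]]]] Hn]; apply/forallP=> -[[|[|[|[|m]]]] Hm];
   rewrite //; apply/eqP; apply/val_inj.
Qed.

Lemma t2_add : additive_map t2.
Proof.
suff H : [forall x : 'Z_2, forall y : 'Z_2, t2 (x+y) == t2 x + t2 y].
  by move=> x y; apply/eqP; move/forallP: H => /(_ x)/forallP/(_ y).
by apply/forallP=> -[[|[|n]] Hn]; apply/forallP=> -[[|[|m]] Hm];
   rewrite //; apply/eqP; apply/val_inj.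
Qed.

Lemma id_add (U : zmodType) : additive_map (fun x : U => x).
Proof. by []. Qed.

Lemma zero_add (U V : zmodType) : additive_map (fun _ : U => (0 : V)).
Proof. by move=> *; rewrite addr0. Qed.

Lemma Z2_double (x : 'Z_2) : x *+ 2 = 0.
Proof. by case: x => -[|[|n]] Hn //; apply/val_inj. Qed.

Lemma s4t2 (x : 'Z_2) : s4 (t2 x) = 0.
Proof. by case: x => -[|[|n]] Hn //; apply/val_inj. Qed.

Lemma t2s4 (y : 'Z_4) : t2 (s4 y) = y *+ 2.
Proof. by case: y => -[|[|[|[|n]]]] Hn //; apply/val_inj. Qed.

Lemma red2_0 : red2 0 = 0.
Proof. by []. Qed.

(* The representable diagrams F_x = J(-, x), written out:
   F_a : A = J(a,a) = Z,   B = J(b,a) = Z/2 (eta beta), C = J(c,a) = Z/2 (eta);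
         psi = - o rho = 0, eta = - o eta = reduction, chi = - o beta = id.
   F_b : A = J(a,b) = Z/2 (rho), B = J(b,b) = Z/4, C = J(c,b) = Z/2 (rho eta);
         psi = s, eta = id, chi = t   (rho eta beta = 2).
   F_c : A = J(a,c) = 0, B = J(b,c) = Z/2 (beta), C = J(c,c) = Z;
         psi = 0, eta = 0, chi = reduction. *)
Definition F_a : EED :=
  @MkEED int 'Z_2 'Z_2 red2 (fun x => x) (fun _ => 0)
    red2_add (@id_add _) (@zero_add _ _)
    (fun x => Z2_double (red2 x)) (fun _ => erefl) (fun y => esym (Z2_double y)).

Definition F_b : EED :=
  @MkEED 'Z_2 'Z_4 'Z_2 (fun x => x) t2 s4
    (@id_add _) t2_add s4_add
    Z2_double s4t2 t2s4.

Lemma Fc_2eta (x : 'I_1) : ((fun _ : 'I_1 => (0 : int)) x) *+ 2 = 0.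
Proof. by []. Qed.
Lemma Fc_cep (y : 'Z_2) : red2 ((fun _ : 'I_1 => (0 : int)) ((fun _ : 'Z_2 => (0 : 'I_1)) y)) = y *+ 2.
Proof. by rewrite Z2_double. Qed.

Definition F_c : EED :=
  @MkEED 'I_1 'Z_2 int (fun _ => 0) red2 (fun _ => 0)
    (@zero_add _ _) red2_add (@zero_add _ _)
    Fc_2eta (fun _ => erefl) Fc_cep.

(* The morphisms F_u : F_x -> F_y (postcomposition with u : x -> y) for the
   generators of J:
   F_beta : F_b -> F_c  components (a: 0, b: s, c: 0)       (beta rho eta = 0)
   F_eta  : F_c -> F_a  components (a: 0, b: id, c: reduction)
   F_rho  : F_a -> F_b  components (a: reduction, b: t, c: id) (rho eta beta = 2) *)
Definition F_beta : EEDhom F_b F_c :=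
  @MkEEDhom F_b F_c (fun _ => 0) s4 (fun _ => 0)
    (@zero_add _ _) s4_add (@zero_add _ _)
    (fun _ => erefl) (fun _ => erefl) s4t2.

Definition F_eta : EEDhom F_c F_a :=
  @MkEEDhom F_c F_a (fun _ => 0) (fun x => x) red2
    (@zero_add _ _) (@id_add _) red2_add
    (fun _ => erefl) (fun _ => erefl) (fun _ => erefl).

Lemma Frho_nat_rho (y : 'Z_2) : red2 0 = s4 (t2 y).
Proof. by rewrite s4t2. Qed.

Definition F_rho : EEDhom F_a F_b :=
  @MkEEDhom F_a F_b red2 t2 (fun x => x)
    red2_add t2_add (@id_add _)
    Frho_nat_rho (fun _ => erefl) (fun _ => erefl).

(* The dual diagram Delta(N): Delta(N)(x) = EED(N, F_{Delta x}) with
   Delta a = c, Delta b = b, Delta c = a, and structure maps given by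
   composition with F_{Delta rho} = F_beta, F_{Delta eta} = F_eta,
   F_{Delta beta} = F_rho. *)
Definition Delta_A (N : EED) := EEDhom N F_c.
Definition Delta_B (N : EED) := EEDhom N F_b.
Definition Delta_C (N : EED) := EEDhom N F_a.
Definition Delta_psi (N : EED) (u : Delta_B N) : Delta_A N := hom_comp F_beta u.
Definition Delta_eta (N : EED) (u : Delta_A N) : Delta_C N := hom_comp F_eta u.
Definition Delta_chi (N : EED) (u : Delta_C N) : Delta_B N := hom_comp F_rho u.
Definition Delta_add (N M : EED) (u v : EEDhom N M) : EEDhom N M := hom_add u v.

Record Bprime (N : EED) := MkBprime {
  bp : EB N -> 'Z_4; bp_add : additive_map bp }.

Record Aprime (N : EED) := MkAprime {
  ap_g : EB N -> 'Z_2; ap_h : EC N -> int;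
  ap_g_add : additive_map ap_g; ap_h_add : additive_map ap_h;
  ap_cond : forall z, ap_g (e_chi N z) = red2 (ap_h z) }.

Record Cprime (N : EED) := MkCprime {
  cp_f : EA N -> int; cp_g : EB N -> 'Z_2;
  cp_f_add : additive_map cp_f; cp_g_add : additive_map cp_g;
  cp_cond : forall x, cp_g (e_chi N (e_eta N x)) = red2 (cp_f x) }.

From HB Require Import structures.
From mathcomp Require Import all_boot all_order all_algebra.
From Stdlib Require Import ProofIrrelevance FunctionalExtensionality.
Set Implicit Arguments. Unset Strict Implicit. Unset Printing Implicit Defensive.
Import GRing.Theory Num.Theory.
Local Open Scope ring_scope.

(* A morphism N -> F_x is determined by the components the explicit
   description keeps, since the structure maps of F_a, F_b, F_c are
   identities, reductions, s or t.  The other components are recovered from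
   two facts.  Z is torsion-free while eta(A) and psi(B) are 2-torsion
   (2 psi = psi chi eta psi = 0), so maps into Z vanish on them.  And t is
   injective with image the 2-torsion of Z/4, which contains the image of chi
   under any map B -> Z/4 (2 chi = chi eta psi chi = 0). *)

Section AdditiveMaps.
Variables (U V : zmodType) (f : U -> V).
Hypothesis f_add : additive_map f.

Lemma additive_map0 : f 0 = 0.
Proof. by apply: (@addrI _ (f 0)); rewrite -f_add !addr0. Qed.

Lemma additive_mapMn2 x : f (x *+ 2) = f x *+ 2.
Proof. by rewrite !mulr2n f_add. Qed.

End AdditiveMaps.

Lemma additive_map_int_double0 (U : zmodType) (f : U -> int) x :
  additive_map f -> x *+ 2 = 0 -> f x = 0.
Proof.
move=> f_add x2; apply/eqP; have := mulrn_eq0 (f x) 2.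
by rewrite -additive_mapMn2 // x2 additive_map0 // eqxx => <-.
Qed.

Lemma e_chi_double (N : EED) z : e_chi N z *+ 2 = 0.
Proof.
by rewrite -e_chietapsi e_psichi (additive_map0 (@e_eta_add N))
  (additive_map0 (@e_chi_add N)).
Qed.

Lemma e_psi_double (N : EED) y : e_psi N y *+ 2 = 0.
Proof. by rewrite -(additive_mapMn2 (@e_psi_add N)) -e_chietapsi e_psichi. Qed.

(* Division by 2 on Z/4, meaningful on the 2-torsion {0, 2}. *)
Definition half4 (k : 'Z_4) : 'Z_2 := ((k : nat) %/ 2)%:R.

Lemma t2_half4 (k : 'Z_4) : k *+ 2 = 0 -> t2 (half4 k) = k.
Proof.
by case: k => -[|[|[|[|n]]]] Hn // H; apply/val_inj; move: H => /(congr1 val).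
Qed.

Lemma t2_inj : injective t2.
Proof.
by move=> [[|[|n]] Hn] [[|[|m]] Hm] // H; apply/val_inj; move: H => /(congr1 val).
Qed.

Lemma EEDhom_ext N M (u v : EEDhom N M) :
  hA u =1 hA v -> hB u =1 hB v -> hC u =1 hC v -> u = v.
Proof.
case: u v => a b c ? ? ? ? ? ? [a' b' c' ? ? ? ? ? ?] /=.
move=> /functional_extensionality Ea /functional_extensionality Eb.
move=> /functional_extensionality Ec; subst.
by f_equal; apply: proof_irrelevance.
Qed.

Lemma Aprime_ext N (u v : Aprime N) : ap_g u =1 ap_g v -> ap_h u =1 ap_h v -> u = v.
Proof.
case: u v => g h ? ? ? [g' h' ? ? ?] /=.
move=> /functional_extensionality Eg /functional_extensionality Eh; subst.
by f_equal; apply: proof_irrelevance.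
Qed.

Lemma Bprime_ext N (u v : Bprime N) : bp u =1 bp v -> u = v.
Proof.
case: u v => g ? [g' ?] /= /functional_extensionality Eg; subst.
by f_equal; apply: proof_irrelevance.
Qed.

Lemma Cprime_ext N (u v : Cprime N) : cp_f u =1 cp_f v -> cp_g u =1 cp_g v -> u = v.
Proof.
case: u v => f g ? ? ? [f' g' ? ? ?] /=.
move=> /functional_extensionality Ef /functional_extensionality Eg; subst.
by f_equal; apply: proof_irrelevance.
Qed.

Section DeltaComponents.
Variable N : EED.

Definition Aprime_of_Delta (u : Delta_A N) : Aprime N :=
  MkAprime (hB_add u) (hC_add u) (h_nat_beta u).

Definition Delta_of_Aprime (a : Aprime N) : Delta_A N :=
  @MkEEDhom N F_c (fun _ => 0) (ap_g a) (ap_h a)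
    (@zero_add _ _) (ap_g_add a) (ap_h_add a)
    (fun _ => erefl) (fun x => additive_map_int_double0 (ap_h_add a) (e_2eta x))
    (ap_cond a).

Lemma Aprime_of_DeltaK : cancel Aprime_of_Delta Delta_of_Aprime.
Proof. by move=> u; apply: EEDhom_ext => //= x; rewrite !ord1. Qed.

Lemma Delta_of_AprimeK : cancel Delta_of_Aprime Aprime_of_Delta.
Proof. by move=> a; apply: Aprime_ext. Qed.

Definition Bprime_of_Delta (u : Delta_B N) : Bprime N := MkBprime (hB_add u).

Section DeltaOfBprime.
Variable b : Bprime N.

Definition Delta_of_Bprime_C z := half4 (bp b (e_chi N z)).

Lemma t2_Delta_of_Bprime_C z : t2 (Delta_of_Bprime_C z) = bp b (e_chi N z).
Proof.
by apply: t2_half4; rewrite -(additive_mapMn2 (bp_add b)) e_chi_double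
  (additive_map0 (bp_add b)).
Qed.

Lemma Delta_of_Bprime_C_add : additive_map Delta_of_Bprime_C.
Proof.
by move=> z z'; apply: t2_inj; rewrite t2_add !t2_Delta_of_Bprime_C e_chi_add bp_add.
Qed.

Definition Delta_of_Bprime_A x := Delta_of_Bprime_C (e_eta N x).

Lemma Delta_of_Bprime_A_add : additive_map Delta_of_Bprime_A.
Proof. by move=> x x'; rewrite /Delta_of_Bprime_A e_eta_add Delta_of_Bprime_C_add. Qed.

Lemma Delta_of_Bprime_rho y : Delta_of_Bprime_A (e_psi N y) = s4 (bp b y).
Proof.
apply: t2_inj; rewrite t2s4 t2_Delta_of_Bprime_C e_chietapsi.
exact: additive_mapMn2 (bp_add b) y.
Qed.

Definition Delta_of_Bprime : Delta_B N :=
  @MkEEDhom N F_b Delta_of_Bprime_A (bp b) Delta_of_Bprime_C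
    Delta_of_Bprime_A_add (bp_add b) Delta_of_Bprime_C_add
    Delta_of_Bprime_rho (fun _ => erefl) (fun z => esym (t2_Delta_of_Bprime_C z)).

End DeltaOfBprime.

Lemma Bprime_of_DeltaK : cancel Bprime_of_Delta Delta_of_Bprime.
Proof.
move=> u; have hC_u z : Delta_of_Bprime_C (Bprime_of_Delta u) z = hC u z.
  by apply: t2_inj; rewrite t2_Delta_of_Bprime_C /= h_nat_beta.
apply: EEDhom_ext => //= x.
by rewrite /Delta_of_Bprime_A hC_u h_nat_eta.
Qed.

Lemma Delta_of_BprimeK : cancel Delta_of_Bprime Bprime_of_Delta.
Proof. by move=> b; apply: Bprime_ext. Qed.

Definition Cprime_of_Delta (u : Delta_C N) : Cprime N :=
  MkCprime (hA_add u) (hB_add u)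
    (fun x => etrans (h_nat_beta u (e_eta N x)) (h_nat_eta u x)).

Section DeltaOfCprime.
Variable c : Cprime N.

Definition Delta_of_Cprime_C z := cp_g c (e_chi N z).

Lemma Delta_of_Cprime_C_add : additive_map Delta_of_Cprime_C.
Proof. by move=> z z'; rewrite /Delta_of_Cprime_C e_chi_add cp_g_add. Qed.

Lemma Delta_of_Cprime_rho y : cp_f c (e_psi N y) = 0.
Proof. exact: additive_map_int_double0 (cp_f_add c) (e_psi_double y). Qed.

Definition Delta_of_Cprime : Delta_C N :=
  @MkEEDhom N F_a (cp_f c) (cp_g c) Delta_of_Cprime_C
    (cp_f_add c) (cp_g_add c) Delta_of_Cprime_C_add
    Delta_of_Cprime_rho (cp_cond c) (fun _ => erefl).

End DeltaOfCprime.

Lemma Cprime_of_DeltaK : cancel Cprime_of_Delta Delta_of_Cprime.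
Proof. by move=> u; apply: EEDhom_ext => //= z; rewrite /Delta_of_Cprime_C /= h_nat_beta. Qed.

Lemma Delta_of_CprimeK : cancel Delta_of_Cprime Cprime_of_Delta.
Proof. by move=> c; apply: Cprime_ext. Qed.

End DeltaComponents.

Theorem proposition7p8 (N : EED) :
  exists (alA : Delta_A N -> Aprime N) (alB : Delta_B N -> Bprime N)
         (alC : Delta_C N -> Cprime N),
    (bijective alA /\ bijective alB /\ bijective alC) /\
    ((forall u v : Delta_A N,
        (forall y, ap_g (alA (Delta_add u v)) y = ap_g (alA u) y + ap_g (alA v) y) /\
        (forall z, ap_h (alA (Delta_add u v)) z = ap_h (alA u) z + ap_h (alA v) z)) /\
     (forall u v : Delta_B N,
        forall y, bp (alB (Delta_add u v)) y = bp (alB u) y + bp (alB v) y) /\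
     (forall u v : Delta_C N,
        (forall x, cp_f (alC (Delta_add u v)) x = cp_f (alC u) x + cp_f (alC v) x) /\
        (forall y, cp_g (alC (Delta_add u v)) y = cp_g (alC u) y + cp_g (alC v) y))) /\
    ((forall u : Delta_B N,
        (forall y, ap_g (alA (Delta_psi u)) y = s4 (bp (alB u) y)) /\
        (forall z, ap_h (alA (Delta_psi u)) z = 0)) /\
     (forall u : Delta_A N,
        (forall x, cp_f (alC (Delta_eta u)) x = 0) /\
        (forall y, cp_g (alC (Delta_eta u)) y = ap_g (alA u) y)) /\
     (forall u : Delta_C N,
        forall y, bp (alB (Delta_chi u)) y = t2 (cp_g (alC u) y))).
Proof.
exists (@Aprime_of_Delta N), (@Bprime_of_Delta N), (@Cprime_of_Delta N).
split; first split; [|split|].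
- exact: Bijective (@Aprime_of_DeltaK N) (@Delta_of_AprimeK N).
- exact: Bijective (@Bprime_of_DeltaK N) (@Delta_of_BprimeK N).
- exact: Bijective (@Cprime_of_DeltaK N) (@Delta_of_CprimeK N).
(* The maps only forget components, so additivity and naturality hold by computation. *)
by split; do !split.
Qed.
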